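(* Let $q$ be a prime power, let $\mathbf{C}\subseteq\mathbf{F}_q^n$ be a projective linear $[n,k]_q$ code with maximum weight $w$, and let $h$ be a positive integer with $h>\log_q w-k+2$. Let $\mathbf{C}_1$ be the simplex complementary code of $\mathbf{C}$ of dimension $k+h$, which is a $[\frac{q^{k+h}-1}{q-1}-n,\ k+h,\ q^{k+h-1}-w]_q$ code with maximum weight $q^{k+h-1}$, and set $n'=\lceil\frac{q(q^{k+h-1}-w)}{q-1}\rceil-q^{k+h-1}$. Then the code $\mathbf{C}'$ obtained from $\mathbf{C}_1$ by the extension construction is a minimal linear code with parameters $[\frac{q^{k+h}-1}{q-1}-n+n',\ k+h,\ q^{k+h-1}-w]_q$ and maximum weight $q^{k+h-1}+n'$, and it violates the Ashikhmin–Barg condition.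
   Context: Projective code: the columns of a generator matrix are nonzero and pairwise linearly independent. Simplex complementary code of dimension $K=k+h$: append $h$ zeros to the columns $\mathbf{g}_1,\dots,\mathbf{g}_n$ of a generator matrix of $\mathbf{C}$, choose a set $P$ of representatives of all one-dimensional subspaces of $\mathbf{F}_q^K$ containing these vectors, and take the code generated by the matrix whose columns are $P\setminus\{\mathbf{g}_1,\dots,\mathbf{g}_n\}$. Extension construction: for a linear $[N,K]_q$ code $\mathbf{D}$ with $K\ge 2$, minimum weight $w_{min}$, maximum weight $w_{max}$ and $n'=\lceil\frac{qw_{min}}{q-1}\rceil-w_{max}\ge 1$, choose a basis $\mathbf{r}_1,\dots,\mathbf{r}_K$ of $\mathbf{D}$ with $wt(\mathbf{r}_1)=w_{max}$, $wt(\mathbf{r}_2)=w_{min}$, and $\mathbf{a}\in(\mathbf{F}_q^* )^{n'}$; the extended code is generated by $(\mathbf{a},\mathbf{r}_1),(\mathbf{0},\mathbf{r}_2),\dots,(\mathbf{0},\mathbf{r}_K)$ in $\mathbf{F}_q^{n'+N}$. A code is minimal if any two nonzero codewords with nested supports are scalar multiples of each other. Ashikhmin–Barg condition: $w_{min}/w_{max}>(q-1)/q$. *)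

(* Linear codes over a finite field F, given by generator
   matrices; the code generated by G : 'M[F]_(m, n) is the row space of G. *)
From HB Require Import structures.
From mathcomp Require Import all_boot all_order all_algebra all_field.
Set Implicit Arguments. Unset Strict Implicit. Unset Printing Implicit Defensive.
Import Order.TTheory GRing.Theory Num.Theory.
Local Open Scope ring_scope.

Section Codes.
Variable F : finFieldType.

Definition supp n (c : 'rV[F]_n) : {set 'I_n} := [set i | c 0 i != 0].
Definition wt n (c : 'rV[F]_n) : nat := #|supp c|.

Definition incode m n (G : 'M[F]_(m, n)) (c : 'rV[F]_n) : bool := (c <= G)%MS.

Definition maxwt m n (G : 'M[F]_(m, n)) : nat :=
  \max_(c : 'rV[F]_n | incode G c) wt c.

Definition minwt m n (G : 'M[F]_(m, n)) : nat :=
  \big[minn/n]_(c : 'rV[F]_n | incode G c && (c != 0)) wt c.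

Definition projective m n (G : 'M[F]_(m, n)) : Prop :=
  (forall i : 'I_n, col i G != 0) /\
  (forall i j : 'I_n, i != j -> \rank (row_mx (col i G) (col j G)) = 2%N).

Definition minimal_code m n (G : 'M[F]_(m, n)) : Prop :=
  forall c c' : 'rV[F]_n, incode G c -> incode G c' -> c != 0 -> c' != 0 ->
    supp c \subset supp c' -> exists a : F, c = a *: c'.

Definition AB_condition m n (G : 'M[F]_(m, n)) : Prop :=
  ((#|F| - 1)%N%:R / (#|F|)%:R : rat) < (minwt G)%:R / (maxwt G)%:R.

Definition pad k h (v : 'cV[F]_k) : 'cV[F]_(k + h) := col_mx v 0.

Definition proj_reps K (P : {set 'cV[F]_K}) : Prop :=
  (forall p, p \in P -> p != 0) /\
  (forall v : 'cV[F]_K, v != 0 ->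
     #|[set p in P | [exists a : F, v == a *: p]]| = 1%N).

Definition ext_block K nn (i1 : 'I_K) (a : 'rV[F]_nn) : 'M[F]_(K, nn) :=
  \matrix_(i, j) (if i == i1 then a 0 j else 0).

End Codes.

Definition ceil_div (a b : nat) : nat := ((a + b - 1) %/ b)%N.

From mathcomp Require Import all_boot all_order all_algebra all_field zify.
From mathcomp Require Import mxabelem.
Import Order.TTheory GRing.Theory Num.Theory.
Local Open Scope ring_scope.

Set Implicit Arguments. Unset Strict Implicit. Unset Printing Implicit Defensive.

(* For a nonzero message x = (x', x''), the q^(K-1) projective points off the
   hyperplane x^\perp split into columns of G1 and padded columns of G, so
   wt(x G1) = q^(K-1) - wt(x' G).  Hence the weights of C1 lie between
   q^(K-1) - w and q^(K-1), both attained, and q^(K-2) > w is exactly the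
   Ashikhmin--Barg inequality for C1, which makes C1 minimal.  Prepending n'
   nonzero coordinates to the maximum-weight basis row keeps the code minimal,
   since nested supports stay nested on the old coordinates, while it raises the
   maximum weight to ceil(q wmin / (q - 1)), which breaks the inequality. *)

Section Weights.
Variable F : finFieldType.
Local Notation q := #|F|.

Lemma wtE n (c : 'rV[F]_n) : wt c = (\sum_j (c 0%R j != 0%R))%N.
Proof.
rewrite /wt /supp -sum1_card big_mkcond.
by apply: eq_bigr => j _; rewrite inE; case: ifP.
Qed.

Lemma wt_le n (c : 'rV[F]_n) : (wt c <= n)%N.
Proof. by rewrite -[X in (_ <= X)%N]card_ord max_card. Qed.

Lemma wt_eq0 n (c : 'rV[F]_n) : (wt c == 0%N) = (c == 0).
Proof.
rewrite /wt cards_eq0; apply/eqP/eqP => [c0 | ->].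
  apply/rowP => j; rewrite mxE; apply/eqP/negPn/negP => cj.
  by have := in_set0 j; rewrite -c0 inE cj.
by apply/setP => j; rewrite !inE mxE eqxx.
Qed.

Lemma wt0 n : wt (0 : 'rV[F]_n) = 0%N.
Proof. by apply/eqP; rewrite wt_eq0. Qed.

Lemma wt_row_mx n1 n2 (u : 'rV[F]_n1) (v : 'rV[F]_n2) :
  wt (row_mx u v) = (wt u + wt v)%N.
Proof.
by rewrite !wtE big_split_ord; congr (_ + _)%N; apply: eq_bigr => j _;
  rewrite ?row_mxEl ?row_mxEr.
Qed.

Lemma wt_scale_full n (l : F) (a : 'rV[F]_n) : (forall j, a 0 j != 0) ->
  wt (l *: a) = ((l != 0%R) * n)%N.
Proof.
move=> a_full; rewrite wtE.
under eq_bigr do rewrite mxE mulf_eq0 (negbTE (a_full _)) orbF.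
by rewrite sum_nat_const card_ord mulnC.
Qed.

Lemma sum_wt_sub_scale n (u v : 'rV[F]_n) : supp u \subset supp v ->
  (\sum_(mu : F) wt (u - mu *: v) = (q - 1) * wt v)%N.
Proof.
move=> /subsetP suv; under eq_bigr do rewrite wtE.
rewrite exchange_big wtE big_distrr /=; apply: eq_bigr => j _.
have [vj0 | vj] := eqVneq (v 0 j) 0.
  have uj0 : u 0 j = 0.
    by apply/eqP/negPn/negP => uj; have := suv j; rewrite !inE uj vj0 eqxx => /(_ isT).
  by rewrite muln0 big1 // => mu _; rewrite !mxE uj0 vj0 mulr0 subrr eqxx.
rewrite muln1 subn1 -(cardsC1 (u 0 j / v 0 j)) -sum1dep_card [in RHS]big_mkcond /=.
apply: eq_bigr => mu _; rewrite !inE !mxE subr_eq0 eq_sym.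
by rewrite (can2_eq (mulfK vj) (divfK vj)); case: eqP.
Qed.

End Weights.

Lemma ltn_ceil_div a b m : (0 < b)%N -> (m < ceil_div a b)%N = (m * b < a)%N.
Proof. by move=> b_gt0; rewrite /ceil_div leq_divRL // mulSn; apply/idP/idP; lia. Qed.

Lemma leq_ceil_div a b : (0 < b)%N -> (a <= ceil_div a b * b)%N.
Proof. by move=> b_gt0; rewrite leqNgt -ltn_ceil_div // ltnn. Qed.

Section CodeWeights.
Variables (F : finFieldType) (m n : nat) (G : 'M[F]_(m, n)).
Local Notation q := #|F|.

Lemma incode_mul x : incode G (x *m G).
Proof. exact: submxMl. Qed.

Lemma maxwt_ub c : incode G c -> (wt c <= maxwt G)%N.
Proof. exact: leq_bigmax_cond. Qed.

Lemma minwt_ub c : incode G c -> c != 0 -> (minwt G <= wt c)%N.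
Proof. by move=> Gc c_nz; apply: (@bigmin_le_cond _ nat _ n c); apply/andP. Qed.

Lemma maxwt_attained : exists x, wt (x *m G) = maxwt G.
Proof.
have [|c /submxP [x ->] max_c] := @eq_bigmax_cond _ (incode G) (@wt F n).
  by apply/card_gt0P; exists 0; apply: sub0mx.
by exists x; rewrite -max_c; apply: eq_bigl.
Qed.

Lemma maxwt_eq x0 : (forall x, (wt (x *m G) <= wt (x0 *m G))%N) ->
  maxwt G = wt (x0 *m G).
Proof.
move=> ub; apply/eqP; rewrite eqn_leq maxwt_ub ?incode_mul // andbT.
by apply/bigmax_leqP => c /submxP [x ->].
Qed.

Lemma minwt_eq x0 : x0 *m G != 0 ->
    (forall x, x *m G != 0 -> (wt (x0 *m G) <= wt (x *m G))%N) ->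
  minwt G = wt (x0 *m G).
Proof.
move=> nz lb; apply/eqP; rewrite eqn_leq minwt_ub ?incode_mul //=.
apply: (@le_bigmin _ nat) => [|_ /andP [/submxP [x ->]]]; [exact: wt_le | exact: lb].
Qed.

Lemma AB_conditionE : (0 < maxwt G)%N ->
  AB_condition G <-> ((q - 1) * maxwt G < q * minwt G)%N.
Proof.
have q_gt0 : (0 < q)%N by apply/card_gt0P; exists 0.
move=> max_gt0; rewrite /AB_condition ltr_pdivlMr ?ltr0n // mulrAC.
by rewrite ltr_pdivrMr ?ltr0n // -!natrM ltr_nat mulnC [(minwt G * _)%N]mulnC.
Qed.

(* If c is not a multiple of c', the q words c - mu c' are nonzero codewords
   whose weights add up to (q - 1) wt c'. *)
Theorem AB_condition_minimal : AB_condition G -> minimal_code G.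
Proof.
move=> AB c c' Gc Gc' c_nz c'_nz /sum_wt_sub_scale sum_wt.
have [/existsP [mu /eqP ->] | /existsPn not_prop] := boolP [exists mu, c == mu *: c'].
  by exists mu.
have max_gt0 : (0 < maxwt G)%N.
  by rewrite (leq_trans _ (maxwt_ub Gc')) // lt0n wt_eq0.
exfalso; move/(AB_conditionE max_gt0): AB; apply/negP; rewrite -leqNgt.
rewrite (leq_trans _ (leq_mul (leqnn _) (maxwt_ub Gc'))) // -sum_wt.
rewrite -sum_nat_const; apply: leq_sum => mu _.
apply: minwt_ub; last by rewrite subr_eq0 not_prop.
by rewrite /incode addmx_sub ?eqmx_opp ?scalemx_sub.
Qed.

End CodeWeights.

Section ProjectiveCounting.
Variables (F : finFieldType) (K : nat).
Local Notation q := #|F|.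

Lemma card_kernel_rV (x : 'rV[F]_K) : x != 0 ->
  #|[set v : 'cV[F]_K | x *m v == 0]| = (q ^ K.-1)%N.
Proof.
move=> x_nz; rewrite -(card_imset _ (@trmx_inj _ _ _)).
have -> : [set v^T | v in [set v | x *m v == 0]] = rowg (kermx x^T).
  apply/setP => u; rewrite inE sub_kermx; apply/imsetP/idP => [[v] | /eqP u_ker].
    by rewrite inE => /eqP xv ->; rewrite -trmx_mul xv trmx0.
  by exists u^T; rewrite ?trmxK // inE -[x]trmxK -trmx_mul u_ker trmx0.
by rewrite card_rowg mxrank_ker mxrank_tr rank_rV x_nz subn1.
Qed.

Variables (P : {set 'cV[F]_K}) (HP : proj_reps P).

Lemma proj_reps_uniq p p' a : p \in P -> p' \in P -> p' = a *: p -> p' = p.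
Proof.
move=> Pp Pp' p'_ap; have /eqP/cards1P [r r_line] := HP.2 _ (HP.1 _ Pp').
have on_line r0 b : r0 \in P -> p' = b *: r0 -> r0 = r.
  move=> Pr0 p'_br0; apply/set1P; rewrite -r_line inE Pr0.
  by apply/existsP; exists b; rewrite -p'_br0.
by rewrite (on_line p a) // (on_line p' 1) ?scale1r.
Qed.

Lemma proj_reps_line v : v != 0 -> exists2 b, b != 0 & exists2 r, r \in P & v = b *: r.
Proof.
move=> v_nz; have /eqP/cards1P [r r_line] := HP.2 _ v_nz.
have /setIdP [Pr /existsP [b /eqP v_br]] : r \in [set r0 in P | [exists b, v == b *: r0]].
  by rewrite r_line set11.
exists b; last by exists r.
by apply: contraNneq v_nz => b0; rewrite v_br b0 scale0r.
Qed.

Lemma card_proj_reps_scale_invariant (S : pred 'cV[F]_K) :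
    (forall a v, a != 0 -> S (a *: v) = S v) ->
  #|[set v | (v != 0) && S v]| = (#|[set p in P | S p]| * (q - 1))%N.
Proof.
move=> S_scale; set A := [set p in P | S p]; apply/esym.
rewrite subn1 -(cardsC1 (0 : F)) mulnC -cardsX.
pose scale (u : F * 'cV[F]_K) := u.1 *: u.2.
have -> : [set v | (v != 0) && S v] = scale @: setX [set~ 0] A.
  apply/setP => v; rewrite inE; apply/andP/imsetP => [[v_nz Sv] | ].
    have [b b_nz [r Pr v_br]] := proj_reps_line v_nz.
    by exists (b, r); rewrite // !inE b_nz Pr -(S_scale b) // -v_br.
  case=> [[b r]]; rewrite !inE /= => /andP [b_nz /andP [Pr Sr]] ->.
  by rewrite /scale scaler_eq0 negb_or b_nz (HP.1 _ Pr) S_scale.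
rewrite card_in_imset // => [[b r] [b' r']]; rewrite !inE /scale /=.
move=> /andP [b_nz /andP [Pr _]] /andP [b'_nz /andP [Pr' _]] br_eq.
have r'r : r' = r.
  apply: (proj_reps_uniq (a := b'^-1 * b)) => //.
  by rewrite -scalerA br_eq scalerA mulVf ?scale1r.
move: br_eq; rewrite r'r => /eqP; rewrite -subr_eq0 -scalerBl scaler_eq0.
by rewrite (negbTE (HP.1 _ Pr)) orbF subr_eq0 => /eqP ->.
Qed.

Lemma card_proj_reps : (#|P| * (q - 1) = q ^ K - 1)%N.
Proof.
have := @card_proj_reps_scale_invariant predT (fun _ _ _ => erefl).
rewrite (eq_card (B := P)) => [<- | p]; last by rewrite !inE andbT.
rewrite (eq_card (B := [set~ 0])) => [|v]; last by rewrite !inE andbT.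
by rewrite cardsC1 card_mx muln1 subn1.
Qed.

Lemma card_proj_reps_off_kernel (x : 'rV[F]_K) : x != 0 ->
  #|[set p in P | x *m p != 0]| = (q ^ K.-1)%N.
Proof.
move=> x_nz; have K_gt0 : (0 < K)%N by case: K x x_nz => // x; rewrite thinmx0 eqxx.
have q_gt1 : (1 < q)%N := finNzRing_gt1 F.
apply/eqP; rewrite -(@eqn_pmul2r (q - 1)) ?subn_gt0 //.
rewrite -card_proj_reps_scale_invariant => [|a v a_nz]; last first.
  by rewrite -scalemxAr scaler_eq0 negb_or a_nz.
have -> : [set v : 'cV_K | (v != 0) && (x *m v != 0)] = ~: [set v | x *m v == 0].
  by apply/setP => v; rewrite !inE andb_idl //; apply: contraNneq => ->; rewrite mulmx0.
have card_split := cardsC [set v : 'cV_K | x *m v == 0].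
rewrite card_kernel_rV // card_mx muln1 in card_split.
by rewrite mulnBr muln1 -expnSr prednK // -card_split addKn.
Qed.

End ProjectiveCounting.

Section Columns.
Variable F : finFieldType.

Lemma mulmx_col_eq0 m n (x : 'rV[F]_m) (M : 'M[F]_(m, n)) j :
  (x *m col j M == 0) = ((x *m M) 0 j == 0).
Proof.
rewrite colE mulmxA -colE; move: (x *m M) => A.
apply/eqP/eqP => [/matrixP/(_ 0 0) | A0j]; first by rewrite !mxE.
by apply/matrixP => i l; rewrite !mxE ord1.
Qed.

Lemma wt_mul_cols m n (M : 'M[F]_(m, n)) (x : 'rV[F]_m) :
    injective (fun j => col j M) ->
  wt (x *m M) = #|[set p in [set col j M | j : 'I_n] | x *m p != 0]|.
Proof.
move=> col_inj; rewrite /wt /supp -(card_imset _ col_inj); apply: eq_card => p.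
rewrite inE; apply/imsetP/andP => [[j] | [/imsetP [j _ ->]]].
  by rewrite inE -mulmx_col_eq0 => xMj ->; split; first exact: imset_f.
by rewrite mulmx_col_eq0 => xMj; exists j; rewrite ?inE.
Qed.

Lemma projective_col_inj m n (G : 'M[F]_(m, n)) :
  projective G -> injective (fun i => col i G).
Proof.
case=> _ rank2 i j /= col_ij; apply/eqP; apply: contraT => /rank2.
rewrite col_ij -[X in row_mx X X]mulmx1 -mul_mx_row => rank_eq2.
by have := leq_trans (mxrankM_maxl (col j G) (row_mx 1%:M 1%:M)) (rank_leq_col _);
  rewrite rank_eq2.
Qed.

End Columns.

Section SimplexComplement.
Variables (F : finFieldType) (n k h N : nat).
Variables (G : 'M[F]_(k, n)) (P : {set 'cV[F]_(k + h)}) (G1 : 'M[F]_(k + h, N)).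
Hypotheses (G_proj : projective G) (HP : proj_reps P)
  (P_G : forall i : 'I_n, pad h (col i G) \in P)
  (G1_inj : injective (fun j : 'I_N => col j G1))
  (G1_cols : [set col j G1 | j : 'I_N] = P :\: [set pad h (col i G) | i : 'I_n]).
Local Notation q := #|F|.
Local Notation Q := (q ^ (k + h - 1))%N.

Let pad_col_inj : injective (fun i => pad h (col i G)).
Proof. by move=> i j /eq_col_mx [/(projective_col_inj G_proj)]. Qed.

Lemma wt_simplex_complement (x : 'rV[F]_(k + h)) : x != 0 ->
  (wt (x *m G1) + wt (lsubmx x *m G) = Q)%N.
Proof.
move=> x_nz; set C0 := [set pad h (col i G) | i : 'I_n].
have G0_cols i : col i (col_mx G 0) = pad h (col i G) by rewrite col_col_mx col0.
have -> : lsubmx x *m G = x *m col_mx G 0.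
  by rewrite -{2}(hsubmxK x) mul_row_col mulmx0 addr0.
rewrite !wt_mul_cols // => [|i j]; last by rewrite !G0_cols => /pad_col_inj.
have -> : [set col i (col_mx G 0) | i : 'I_n] = C0 by apply: eq_imset.
rewrite G1_cols -/C0 subn1 -(card_proj_reps_off_kernel HP x_nz).
rewrite -(cardsID C0 [set p in P | _]) addnC; congr (_ + _)%N; apply: eq_card => p.
  rewrite !inE andbC; case C0p: (p \in C0); rewrite ?andbF //=.
  by case/imsetP: C0p => i _ ->; rewrite P_G.
by rewrite !inE andbA.
Qed.

Lemma size_simplex_complement : N = ((q ^ (k + h) - 1) %/ (q - 1) - n)%N.
Proof.
rewrite -(card_proj_reps HP) mulnK ?subn_gt0 ?finNzRing_gt1 //.
rewrite -[N in LHS]card_ord -(card_imset _ G1_inj) G1_cols cardsD (setIidPr _).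
  by rewrite card_imset ?card_ord.
by apply/subsetP => _ /imsetP [i _ ->].
Qed.

Lemma wt_simplex_complement_ge (x : 'rV[F]_(k + h)) : x != 0 ->
  (Q - maxwt G <= wt (x *m G1))%N.
Proof.
move=> x_nz; have := wt_simplex_complement x_nz.
have := maxwt_ub (incode_mul G (lsubmx x)); lia.
Qed.

Lemma rank_simplex_complement : (maxwt G < Q)%N -> \rank G1 = (k + h)%N.
Proof.
move=> maxG_lt; apply/eqP/inj_row_free => x xG1_0; apply/eqP; apply: contraT => x_nz.
by have := wt_simplex_complement_ge x_nz; rewrite xG1_0 wt0 leqn0 subn_eq0 leqNgt maxG_lt.
Qed.

Hypothesis h_gt0 : (0 < h)%N.

Local Notation ones := (const_mx 1 : 'rV[F]_h).

Let ones_nz (z : 'rV[F]_k) : row_mx z ones != 0.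
Proof.
apply/eqP; rewrite -row_mx0 => /eq_row_mx [_ /rowP /(_ (Ordinal h_gt0))].
by rewrite !mxE => /eqP; rewrite oner_eq0.
Qed.

Lemma maxwt_simplex_complement : maxwt G1 = Q.
Proof.
have := wt_simplex_complement (ones_nz 0); rewrite row_mxKl mul0mx wt0 addn0 => wt_Q.
rewrite -wt_Q; apply: maxwt_eq => x; rewrite wt_Q.
have [-> | x_nz] := eqVneq x 0; first by rewrite mul0mx wt0.
by rewrite -(wt_simplex_complement x_nz) leq_addr.
Qed.

Lemma minwt_simplex_complement : (maxwt G < Q)%N -> minwt G1 = (Q - maxwt G)%N.
Proof.
move=> maxG_lt; have [z wt_z] := maxwt_attained G.
have := wt_simplex_complement (ones_nz z); rewrite row_mxKl wt_z => wt_sum.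
have wt_min : wt (row_mx z ones *m G1) = (Q - maxwt G)%N by rewrite -wt_sum addnK.
rewrite -wt_min; apply: minwt_eq => [|x xG1_nz].
  by rewrite -wt_eq0 wt_min subn_eq0 -ltnNge.
by rewrite wt_min wt_simplex_complement_ge //; apply: contraNneq xG1_nz => ->; rewrite mul0mx.
Qed.

Lemma simplex_complement_parameters : (maxwt G < Q)%N ->
  [/\ N = ((q ^ (k + h) - 1) %/ (q - 1) - n)%N, \rank G1 = (k + h)%N,
       minwt G1 = (Q - maxwt G)%N & maxwt G1 = Q].
Proof.
move=> maxG_lt; split; first exact: size_simplex_complement.
- exact: rank_simplex_complement.
- exact: minwt_simplex_complement.
- exact: maxwt_simplex_complement.
Qed.

End SimplexComplement.

Section RowSpaceInvariance.
Variables (F : finFieldType) (m1 m2 n : nat) (A : 'M[F]_(m1, n)) (B : 'M[F]_(m2, n)).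
Hypothesis eqAB : (A == B)%MS.

Lemma eqmx_maxwt : maxwt A = maxwt B.
Proof. by apply: eq_bigl => c; rewrite /incode (eqmxP eqAB). Qed.

Lemma eqmx_minwt : minwt A = minwt B.
Proof. by apply: eq_bigl => c; rewrite /incode (eqmxP eqAB). Qed.

End RowSpaceInvariance.

Section Extension.
Variables (F : finFieldType) (K N nn : nat) (R : 'M[F]_(K, N)).
Hypothesis R_free : row_free R.

Lemma row_free_row_mx (E : 'M[F]_(K, nn)) : row_free (row_mx E R).
Proof.
rewrite /row_free eqn_leq rank_leq_row /=.
apply: leq_trans (mxrankM_maxl _ (col_mx 0 1%:M)).
by rewrite mul_row_col mulmx0 add0r mulmx1 (eqP R_free).
Qed.

Lemma minimal_code_row_mx (E : 'M[F]_(K, nn)) :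
  minimal_code R -> minimal_code (row_mx E R).
Proof.
move=> R_min _ _ /submxP [x ->] /submxP [y ->] xER_nz yER_nz supp_sub.
have xR_nz : x *m R != 0.
  by rewrite mulmx_free_eq0 //; apply: contraNneq xER_nz => ->; rewrite mul0mx.
have yR_nz : y *m R != 0.
  by rewrite mulmx_free_eq0 //; apply: contraNneq yER_nz => ->; rewrite mul0mx.
have supp_R : supp (x *m R) \subset supp (y *m R).
  apply/subsetP => j; have := subsetP supp_sub (rshift nn j).
  by rewrite !inE !mul_mx_row !row_mxEr.
have [mu xR_muyR] := R_min _ _ (incode_mul R x) (incode_mul R y) xR_nz yR_nz supp_R.
exists mu; rewrite scalemxAl; congr (_ *m _); apply: (row_free_inj R_free).
by rewrite xR_muyR scalemxAl.
Qed.

Variables (i1 : 'I_K) (a : 'rV[F]_nn).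
Hypothesis a_full : forall j, a 0 j != 0.
Local Notation G' := (row_mx (ext_block i1 a) R).

Lemma mul_ext_block (x : 'rV[F]_K) : x *m ext_block i1 a = x 0 i1 *: a.
Proof.
apply/rowP => j; rewrite !mxE (bigD1 i1) //= big1 => [|i i_neq]; rewrite !mxE.
  by rewrite eqxx addr0.
by rewrite (negbTE i_neq) mulr0.
Qed.

Lemma wt_extension (x : 'rV[F]_K) :
  wt (x *m G') = ((x 0%R i1 != 0%R) * nn + wt (x *m R))%N.
Proof. by rewrite mul_mx_row wt_row_mx mul_ext_block wt_scale_full. Qed.

Lemma maxwt_extension : wt (row i1 R) = maxwt R -> maxwt G' = (maxwt R + nn)%N.
Proof.
move=> row_max; have wt_top : wt (delta_mx 0 i1 *m G') = (maxwt R + nn)%N.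
  by rewrite wt_extension mxE !eqxx oner_neq0 mul1n -rowE row_max addnC.
rewrite -wt_top; apply: maxwt_eq => x; rewrite wt_top wt_extension addnC.
by rewrite leq_add ?maxwt_ub ?incode_mul // -{2}[nn]mul1n leq_mul2r leq_b1 orbT.
Qed.

Lemma minwt_extension i2 : i1 != i2 -> wt (row i2 R) = minwt R -> minwt G' = minwt R.
Proof.
move=> i12 row_min; have wt_bot : wt (delta_mx 0 i2 *m G') = minwt R.
  by rewrite wt_extension mxE eqxx (negbTE i12) eqxx mul0n -rowE row_min.
rewrite -wt_bot; apply: minwt_eq => [|x xG'_nz].
  rewrite -wt_eq0 wt_bot -row_min wt_eq0 rowE mulmx_free_eq0 //.
  by apply/eqP => /matrixP/(_ 0 i2)/eqP; rewrite !mxE !eqxx oner_eq0.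
have x_nz : x != 0 by apply: contraNneq xG'_nz => ->; rewrite mul0mx.
rewrite wt_bot wt_extension (leq_trans _ (leq_addl _ _)) // minwt_ub ?incode_mul //.
by rewrite mulmx_free_eq0.
Qed.

End Extension.

Unset Implicit Arguments.

Theorem corollary3p1
  (F : finFieldType) (n k h : nat)
  (* the projective [n,k]_q code C with generator matrix G and max weight w *)
  (G : 'M[F]_(k, n)) (w : nat)
  (Hk : (0 < k)%N) (HG : row_free G) (Hproj : projective G) (Hw : w = maxwt G)
  (Hh : (0 < h)%N)
  (* h > log_q w - k + 2, i.e. q^(k+h-2) > w *)
  (Hhw : (w < #|F| ^ (k + h - 2))%N)
  (* simplex complementary code C1 of dimension k+h, generated by G1 *)
  (P : {set 'cV[F]_(k + h)}) (HP : proj_reps P)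
  (HPg : forall i : 'I_n, pad h (col i G) \in P)
  (N : nat) (G1 : 'M[F]_(k + h, N))
  (HG1inj : injective (fun j : 'I_N => col j G1))
  (HG1cols : [set col j G1 | j : 'I_N] = P :\: [set pad h (col i G) | i : 'I_n])
  (* extension construction applied to C1 *)
  (R : 'M[F]_(k + h, N)) (HRfree : row_free R) (HRspan : (R == G1)%MS)
  (i1 i2 : 'I_(k + h)) (Hi12 : i1 != i2)
  (Hr1 : wt (row i1 R) = maxwt G1) (Hr2 : wt (row i2 R) = minwt G1)
  (nn : nat)
  (Hnn : nn = (ceil_div (#|F| * minwt G1) (#|F| - 1) - maxwt G1)%N)
  (a : 'rV[F]_nn) (Ha : forall j, a 0 j != 0) :
  let q := #|F| in
  let K := (k + h)%N in
  let n' := (ceil_div (q * (q ^ (K - 1) - w)) (q - 1) - q ^ (K - 1))%N in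
  let G' : 'M[F]_(K, nn + N) := row_mx (ext_block i1 a) R in
  (* C1 is a [(q^K-1)/(q-1) - n, K, q^(K-1) - w] code with max weight q^(K-1) *)
  [/\ N = ((q ^ K - 1) %/ (q - 1) - n)%N, \rank G1 = K,
      minwt G1 = (q ^ (K - 1) - w)%N & maxwt G1 = (q ^ (K - 1))%N] /\
  (* C' is a minimal [(q^K-1)/(q-1) - n + n', K, q^(K-1) - w] code with
     maximum weight q^(K-1) + n', violating the Ashikhmin--Barg condition *)
  [/\ (0 < nn)%N /\ nn = n', (nn + N = (q ^ K - 1) %/ (q - 1) - n + n')%N,
      \rank G' = K,
      minwt G' = (q ^ (K - 1) - w)%N /\ maxwt G' = (q ^ (K - 1) + n')%N &
      minimal_code G' /\ ~ AB_condition G'].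
Proof.
move=> q K n' G'; subst w.
have q_gt1 : (1 < q)%N := finNzRing_gt1 F.
set Q := (q ^ (K - 1))%N.
have Q_split : Q = (q * q ^ (k + h - 2))%N.
  by rewrite -expnS /Q /K; congr (_ ^ _)%N; lia.
have maxG_lt : (maxwt G < Q)%N by rewrite Q_split (leq_trans Hhw) // leq_pmull // ltnW.
have AB_C1 : ((q - 1) * Q < q * (Q - maxwt G))%N.
  by rewrite Q_split; move: (q ^ (k + h - 2))%N Hhw => T maxG_lt_T; nia.
have [sizeN rankG1 minG1 maxG1] :=
  simplex_complement_parameters Hproj HP HPg HG1inj HG1cols Hh maxG_lt.
have maxR : maxwt R = Q by rewrite (eqmx_maxwt HRspan).
have minR : minwt R = (Q - maxwt G)%N by rewrite (eqmx_minwt HRspan).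
have R_min : minimal_code R.
  by apply/AB_condition_minimal/AB_conditionE; rewrite maxR ?minR // (leq_ltn_trans _ maxG_lt).
have nn_eq : nn = n' by rewrite Hnn minG1 maxG1.
have ceil_eq : (Q + nn = ceil_div (q * (Q - maxwt G)) (q - 1))%N.
  by rewrite Hnn minG1 maxG1 subnKC // ltnW // ltn_ceil_div ?subn_gt0 // mulnC.
have minG' : minwt G' = (Q - maxwt G)%N.
  by rewrite (minwt_extension HRfree Ha Hi12) minR // Hr2 minG1.
have maxG' : maxwt G' = (Q + nn)%N.
  by rewrite (maxwt_extension Ha) maxR // Hr1 maxG1.
split; first by [].
split.
- by rewrite -nn_eq -(ltn_add2l Q) addn0 ceil_eq ltn_ceil_div ?subn_gt0 // mulnC.
- by rewrite sizeN nn_eq addnC.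
- exact/eqP/row_free_row_mx.
- by rewrite minG' maxG' nn_eq.
split; first exact: minimal_code_row_mx.
rewrite AB_conditionE maxG' ?minG' ?addn_gt0 ?(leq_ltn_trans _ maxG_lt) //.
by apply/negP; rewrite ceil_eq -leqNgt [X in (_ <= X)%N]mulnC leq_ceil_div ?subn_gt0.
Qed.
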